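(* Let $X\subseteq R^n$ be an unbounded definable set. Then $X$ is not definably contractible.
   Context: Throughout, $\mathcal R=\langle R,<,+,0,\{x\mapsto\lambda x\}_{\lambda\in\Lambda}\rangle$ is an ordered vector space over an ordered division ring $\Lambda$; ''definable'' means definable in $\mathcal R$ with parameters; $R^n$ carries the product of the order topology. A set is bounded if it is contained in a box $(a_1,b_1)\times\dots\times(a_n,b_n)$ with $a_i,b_i\in R$. For definable $A\subseteq X$, $X$ deformation retracts to $A$ if there are $q\in R$, $q\ge0$, and a definable continuous $H:[0,q]\times X\to X$ with $H(0,X)=A$, $H(t,a)=a$ for all $t\in[0,q]$, $a\in A$, and $H(q,x)=x$ for all $x\in X$; $X$ is definably contractible if it deformation retracts to a singleton contained in $X$. *)

From HB Require Import structures.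
From mathcomp Require Import all_boot all_order all_algebra.
Set Implicit Arguments. Unset Strict Implicit. Unset Printing Implicit Defensive.
Import GRing.Theory.
Local Open Scope ring_scope.

Definition strict_total_order (T : Type) (lt : T -> T -> Prop) : Prop :=
  (forall x, ~ lt x x) /\
  (forall x y z, lt x y -> lt y z -> lt x z) /\
  (forall x y, lt x y \/ x = y \/ lt y x).

Definition ordered_division_ring (L : unitRingType) (ltL : L -> L -> Prop) : Prop :=
  (forall l : L, l != 0 -> l \is a GRing.unit) /\
  strict_total_order ltL /\
  (forall a b c : L, ltL a b -> ltL (a + c) (b + c)) /\
  (forall a b : L, ltL 0 a -> ltL 0 b -> ltL 0 (a * b)).

Definition ordered_vector_space (L : unitRingType) (ltL : L -> L -> Prop)
    (R : lmodType L) (ltR : R -> R -> Prop) : Prop :=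
  strict_total_order ltR /\
  (forall x y z : R, ltR x y -> ltR (x + z) (y + z)) /\
  (forall (l : L) (x y : R), ltL 0 l -> ltR x y -> ltR (l *: x) (l *: y)).

Section Definability.
Variables (L : unitRingType) (R : lmodType L) (ltR : R -> R -> Prop).

Inductive term : Type :=
  | TVar of nat
  | TConst of R
  | TZero
  | TAdd of term & term
  | TScal of L & term.

Fixpoint teval (e : nat -> R) (t : term) : R :=
  match t with
  | TVar i => e i
  | TConst c => c
  | TZero => 0
  | TAdd s u => teval e s + teval e u
  | TScal l s => l *: teval e s
  end.

Inductive formula : Type :=
  | FLt of term & term
  | FEq of term & term
  | FNot of formula
  | FAnd of formula & formula
  | FOr of formula & formula
  | FEx of nat & formula.

Fixpoint holds (e : nat -> R) (f : formula) : Prop :=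
  match f with
  | FLt s u => ltR (teval e s) (teval e u)
  | FEq s u => teval e s = teval e u
  | FNot g => ~ holds e g
  | FAnd g h => holds e g /\ holds e h
  | FOr g h => holds e g \/ holds e h
  | FEx i g => exists r : R, holds (fun k => if k == i then r else e k) g
  end.

(* Points of R^n are functions 'I_n -> R; variable k is the k-th coordinate. *)
Definition env_of (n : nat) (x : 'I_n -> R) : nat -> R :=
  fun k => match (insub k : option 'I_n) with Some i => x i | None => 0 end.

Definition definable (n : nat) (S : ('I_n -> R) -> Prop) : Prop :=
  exists f : formula, forall x : 'I_n -> R, S x <-> holds (env_of x) f.

Definition lpart (m k : nat) (z : 'I_(m + k) -> R) : 'I_m -> R :=
  fun i => z (lshift k i).
Definition rpart (m k : nat) (z : 'I_(m + k) -> R) : 'I_k -> R :=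
  fun j => z (rshift m j).

Definition definable_map (m k : nat) (D : ('I_m -> R) -> Prop)
    (f : ('I_m -> R) -> ('I_k -> R)) : Prop :=
  definable (fun z : 'I_(m + k) -> R =>
    D (lpart z) /\ forall j, rpart z j = f (lpart z) j).

(* Continuity of f restricted to D, for the product of the order topology
   (basic open sets: open boxes; R is assumed to have no endpoints). *)
Definition continuous_on (m k : nat) (D : ('I_m -> R) -> Prop)
    (f : ('I_m -> R) -> ('I_k -> R)) : Prop :=
  forall w, D w ->
  forall a b : 'I_k -> R, (forall j, ltR (a j) (f w j) /\ ltR (f w j) (b j)) ->
  exists c d : 'I_m -> R, (forall i, ltR (c i) (w i) /\ ltR (w i) (d i)) /\
    forall v, D v -> (forall i, ltR (c i) (v i) /\ ltR (v i) (d i)) ->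
      forall j, ltR (a j) (f v j) /\ ltR (f v j) (b j).

Definition bounded (n : nat) (X : ('I_n -> R) -> Prop) : Prop :=
  exists a b : 'I_n -> R, forall x, X x -> forall i, ltR (a i) (x i) /\ ltR (x i) (b i).

Definition le_R (x y : R) : Prop := x = y \/ ltR x y.

Definition tfirst (n : nat) (w : 'I_(1 + n) -> R) : R := w (lshift n ord0).
Definition tlast (n : nat) (w : 'I_(1 + n) -> R) : 'I_n -> R := fun j => w (rshift 1 j).

Definition deformation_retracts (n : nat) (X A : ('I_n -> R) -> Prop) : Prop :=
  (forall a, A a -> X a) /\ definable A /\
  exists q : R, le_R 0 q /\
  exists H : R -> ('I_n -> R) -> ('I_n -> R),
    let D := fun w : 'I_(1 + n) -> R =>
      le_R 0 (tfirst w) /\ le_R (tfirst w) q /\ X (tlast w) in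
    let Hw := fun w : 'I_(1 + n) -> R => H (tfirst w) (tlast w) in
    definable_map D Hw /\ continuous_on D Hw /\
    (forall t x, le_R 0 t -> le_R t q -> X x -> X (H t x)) /\
    (forall x, X x -> A (H 0 x)) /\
    (forall a, A a -> exists x, X x /\ forall j, H 0 x j = a j) /\
    (forall t a, le_R 0 t -> le_R t q -> A a -> forall j, H t a j = a j) /\
    (forall x, X x -> forall j, H q x j = x j).

Definition definably_contractible (n : nat) (X : ('I_n -> R) -> Prop) : Prop :=
  exists p : 'I_n -> R, X p /\ deformation_retracts X (fun y => forall j, y j = p j).

End Definability.

(* Quantifier elimination for ordered vector spaces (by test points: the roots
   of the atoms, their midpoints, and points just beyond them) turns the graph
   of [t |-> H t x i], for a definable homotopy [H], into a quantifier-free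
   formula in the time [t] and the value [z], with the coordinates of [x] as
   parameters. Every atom is affine in [t] and [z], and the slope of its root
   line [z = l t + c] is a ratio of scalars of the formula, independent of the
   parameters. A continuous function whose graph is defined by such a formula
   follows these root lines between finitely many breakpoints, hence
   [|H q x i - H 0 x i| <= K q] with [K] independent of [x]. If [X] contracts to
   [p], then [H 0 x = p] and [H q x = x], so [X] lies in a box around [p]. *)

From HB Require Import structures.
From mathcomp Require Import all_boot all_order all_algebra.
From mathcomp Require Import zify.
From Stdlib Require Import Classical FunctionalExtensionality.
From Stdlib Require List.
Set Implicit Arguments. Unset Strict Implicit. Unset Printing Implicit Defensive.
Import GRing.Theory.
Local Open Scope ring_scope.

Section OrderedDivisionRing.
Variables (L : unitRingType) (ltL : L -> L -> Prop).
Hypothesis hL : ordered_division_ring ltL.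

Definition leL (a b : L) := a = b \/ ltL a b.

Lemma ltL_irr (a : L) : ~ ltL a a. Proof. by case: hL => _ [[? _] _]. Qed.
Lemma ltL_trans (a b c : L) : ltL a b -> ltL b c -> ltL a c.
Proof. by case: hL => _ [[_ [? _]] _]; eauto. Qed.
Lemma ltL_total (a b : L) : ltL a b \/ a = b \/ ltL b a.
Proof. by case: hL => _ [[_ [_ ?]] _]. Qed.
Lemma ltL_add2r (a b c : L) : ltL a b -> ltL (a + c) (b + c).
Proof. by case: hL => _ [_ [? _]]; auto. Qed.
Lemma mulL_gt0 (a b : L) : ltL 0 a -> ltL 0 b -> ltL 0 (a * b).
Proof. by case: hL => _ [_ [_ ?]]; auto. Qed.
Lemma unitL (a : L) : a != 0 -> a \is a GRing.unit.
Proof. by case: hL => ? _; auto. Qed.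

Lemma ltL_opp (a b : L) : ltL a b -> ltL (- b) (- a).
Proof. by move/(ltL_add2r (- a - b)); rewrite addrA subrr add0r addrC subrK. Qed.
Lemma oppL_gt0 (a : L) : ltL a 0 -> ltL 0 (- a).
Proof. by move/ltL_opp; rewrite oppr0. Qed.
Lemma oppL_lt0 (a : L) : ltL 0 (- a) -> ltL a 0.
Proof. by move/ltL_opp; rewrite oppr0 opprK. Qed.
Lemma ltL_neq0 (a : L) : ltL 0 a -> a != 0.
Proof. by move=> h; apply/eqP => a0; move: h; rewrite a0; apply: ltL_irr. Qed.
Lemma addL_gt0 (a b : L) : ltL 0 a -> ltL 0 b -> ltL 0 (a + b).
Proof.
move=> ha hb; apply: ltL_trans ha _.
by have := ltL_add2r a hb; rewrite add0r addrC.
Qed.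
Lemma addL_ge0 (a b : L) : leL 0 a -> leL 0 b -> leL 0 (a + b).
Proof.
case=> [<-|ha]; first by rewrite add0r.
by case=> [<-|hb]; right; [rewrite addr0 | apply: addL_gt0].
Qed.

Lemma ltL01 : ltL 0 1.
Proof.
case: (ltL_total 0 1) => [//|[e|h]]; first by move: (oner_neq0 L); rewrite -e eqxx.
have h1 := oppL_gt0 h; have := mulL_gt0 h1 h1; rewrite mulrNN mulr1 => h2.
by case: (ltL_irr (ltL_trans h h2)).
Qed.

Lemma twoL_gt0 : ltL 0 (1 + 1). Proof. exact: addL_gt0 ltL01 ltL01. Qed.

Lemma invL_gt0 (a : L) : ltL 0 a -> ltL 0 a^-1.
Proof.
move=> h; have ua := unitL (ltL_neq0 h).
case: (ltL_total 0 a^-1) => [//|[e|h2]].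
  by have := mulrV ua; rewrite -e mulr0 => /eqP; rewrite eq_sym oner_eq0.
have := mulL_gt0 h (oppL_gt0 h2); rewrite mulrN mulrV // => h3.
by case: (ltL_irr (ltL_trans (oppL_lt0 h3) ltL01)).
Qed.

Lemma absL_exists (a : L) : exists b, [/\ leL 0 b, leL 0 (b - a) & leL 0 (b + a)].
Proof.
case: (ltL_total a 0) => [an|[->|ap]].
- have := oppL_gt0 an => an'.
  by exists (- a); split; [right | right; apply: addL_gt0 | left; rewrite addNr].
- by exists 0; rewrite subr0 addr0; split; left.
- by exists a; split; [right | left; rewrite subrr | right; apply: addL_gt0].
Qed.

Lemma list_boundL (l : list L) :
  exists K, leL 0 K /\ forall a, List.In a l -> leL 0 (K - a) /\ leL 0 (K + a).
Proof.
elim: l => [|b l [K [K0 hK]]]; first by exists 0; split; [left|].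
have [c [c0 cb cb']] := absL_exists b.
exists (K + c); split=> [|a [<-|ha]]; first exact: addL_ge0.
  by rewrite -!addrA; split; apply: addL_ge0.
have [Ka Ka'] := hK a ha.
by split; rewrite addrAC; apply: addL_ge0.
Qed.

End OrderedDivisionRing.

Section OrderedVectorSpace.
Variables (L : unitRingType) (ltL : L -> L -> Prop) (R : lmodType L) (ltR : R -> R -> Prop).
Hypothesis hL : ordered_division_ring ltL.
Hypothesis hR : ordered_vector_space ltL ltR.

Lemma ltR_irr (x : R) : ~ ltR x x. Proof. by case: hR => [[? _] _]. Qed.
Lemma ltR_trans (x y z : R) : ltR x y -> ltR y z -> ltR x z.
Proof. by case: hR => [[_ [? _]] _]; eauto. Qed.
Lemma ltR_total (x y : R) : ltR x y \/ x = y \/ ltR y x.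
Proof. by case: hR => [[_ [_ ?]] _]. Qed.
Lemma ltR_add2r (x y z : R) : ltR x y -> ltR (x + z) (y + z).
Proof. by case: hR => _ [? _]; auto. Qed.
Lemma ltR_scale (l : L) (x y : R) : ltL 0 l -> ltR x y -> ltR (l *: x) (l *: y).
Proof. by case: hR => _ [_ ?]; auto. Qed.

Lemma ltR_asym (x y : R) : ltR x y -> ~ ltR y x.
Proof. by move=> h1 h2; apply: ltR_irr (ltR_trans h1 h2). Qed.
Lemma leR_ltR_trans (x y z : R) : le_R ltR x y -> ltR y z -> ltR x z.
Proof. by case=> [->//|h]; apply: ltR_trans. Qed.
Lemma ltR_leR_trans (x y z : R) : ltR x y -> le_R ltR y z -> ltR x z.
Proof. by move=> h [<-//|]; apply: ltR_trans. Qed.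

Lemma ltR_add2l (x y z : R) : ltR x y -> ltR (z + x) (z + y).
Proof. by rewrite ![z + _]addrC; apply: ltR_add2r. Qed.
Lemma leR_add (x y z w : R) : le_R ltR x y -> le_R ltR z w -> le_R ltR (x + z) (y + w).
Proof.
case=> [<-|h1] [<-|h2]; [by left | right..].
- exact: ltR_add2l.
- exact: ltR_add2r.
- exact: ltR_trans (ltR_add2r z h1) (ltR_add2l y h2).
Qed.

Lemma subR_gt0 (x y : R) : ltR 0 (y - x) <-> ltR x y.
Proof.
split=> [/(ltR_add2r x)|/(ltR_add2r (- x))]; first by rewrite add0r subrK.
by rewrite subrr.
Qed.
Lemma subR_lt0 (x y : R) : ltR (x - y) 0 <-> ltR x y.
Proof.
split=> [/(ltR_add2r y)|/(ltR_add2r (- y))]; first by rewrite add0r subrK.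
by rewrite subrr.
Qed.
Lemma subR_ge0 (x y : R) : le_R ltR 0 (y - x) -> le_R ltR x y.
Proof.
case=> [/eqP|/subR_gt0]; last by right.
by rewrite eq_sym subr_eq0 => /eqP ->; left.
Qed.

Lemma ltR_opp (x y : R) : ltR x y -> ltR (- y) (- x).
Proof. by move/(ltR_add2r (- x - y)); rewrite addrA subrr add0r addrC subrK. Qed.
Lemma oppR_lt0 (x : R) : ltR (- x) 0 <-> ltR 0 x.
Proof. by split=> /ltR_opp; rewrite ?oppr0 ?opprK. Qed.

Lemma ltR_addr (d x : R) : ltR 0 d -> ltR x (x + d).
Proof. by move/(ltR_add2l x); rewrite addr0. Qed.
Lemma ltR_subr (d x : R) : ltR 0 d -> ltR (x - d) x.
Proof. by move/ltR_opp/(ltR_add2l x); rewrite oppr0 addr0. Qed.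

Lemma scaleR_eq0 (l : L) (x : R) : l != 0 -> l *: x = 0 -> x = 0.
Proof.
move=> l0 e; have := congr1 (fun v => l^-1 *: v) e.
by rewrite scalerA mulVr ?scale1r ?scaler0 //; apply: (unitL hL).
Qed.

Lemma ltR_scale2 (l : L) (x y : R) : ltL 0 l -> ltR (l *: x) (l *: y) <-> ltR x y.
Proof.
move=> l0; split=> [/(ltR_scale (invL_gt0 hL l0))|/(ltR_scale l0)] //.
by rewrite !scalerA mulVr ?scale1r //; apply: (unitL hL); apply: (ltL_neq0 hL).
Qed.
Lemma scaleR_gt0 (l : L) (x : R) : ltL 0 l -> ltR 0 (l *: x) <-> ltR 0 x.
Proof. by move=> l0; rewrite -(ltR_scale2 0 x l0) scaler0. Qed.
Lemma scaleR_lt0 (l : L) (x : R) : ltL 0 l -> ltR (l *: x) 0 <-> ltR x 0.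
Proof. by move=> l0; rewrite -(ltR_scale2 x 0 l0) scaler0. Qed.

Lemma scaleR_ge0 (l : L) (x : R) : leL ltL 0 l -> ltR 0 x -> le_R ltR 0 (l *: x).
Proof.
case=> [<-|l0] x0; first by left; rewrite scale0r.
by right; apply/(scaleR_gt0 x l0).
Qed.

Definition in_cc (a b t : R) := le_R ltR a t /\ le_R ltR t b.

Definition midR (x y : R) : R := (1 + 1 : L)^-1 *: (x + y).

Lemma midRR (x : R) : midR x x = x.
Proof.
rewrite /midR -{1 2}(scale1r x) -scalerDl scalerA mulVr ?scale1r //.
exact/(unitL hL)/(ltL_neq0 hL)/(twoL_gt0 hL).
Qed.
Lemma midR_gtl (x y : R) : ltR x y -> ltR x (midR x y).
Proof.
move=> h; rewrite -{1}(midRR x); apply: ltR_scale; last exact: ltR_add2l.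
exact/(invL_gt0 hL)/(twoL_gt0 hL).
Qed.
Lemma midR_ltr (x y : R) : ltR x y -> ltR (midR x y) y.
Proof.
move=> h; rewrite -{2}(midRR y); apply: ltR_scale; last exact: ltR_add2r.
exact/(invL_gt0 hL)/(twoL_gt0 hL).
Qed.

Lemma exists_ltR_min (u v d : R) : ltR u v -> ltR u d ->
  exists s, [/\ ltR u s, ltR s v & ltR s d].
Proof.
move=> uv ud; case: (ltR_total d v) => [dv|[<-|vd]].
- by exists (midR u d); split; [apply: midR_gtl | apply: ltR_trans (midR_ltr ud) dv
    | apply: midR_ltr].
- by exists (midR u d); split; [apply: midR_gtl | apply: midR_ltr | apply: midR_ltr].
- by exists (midR u v); split; [apply: midR_gtl | apply: midR_ltr
    | apply: ltR_trans (midR_ltr uv) vd].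
Qed.

Lemma exists_ltR_max (u v c : R) : ltR u v -> ltR c v ->
  exists s, [/\ ltR u s, ltR s v & ltR c s].
Proof.
move=> uv cv; case: (ltR_total c u) => [cu|[->|uc]].
- by exists (midR u v); split; [apply: midR_gtl | apply: midR_ltr
    | apply: ltR_trans cu (midR_gtl uv)].
- by exists (midR u v); split; [apply: midR_gtl | apply: midR_ltr | apply: midR_gtl].
- by exists (midR c v); split; [apply: ltR_trans uc (midR_gtl cv) | apply: midR_ltr
    | apply: midR_gtl].
Qed.

End OrderedVectorSpace.

Section LinearTerms.
Variables (L : unitRingType) (R : lmodType L) (ltR : R -> R -> Prop).

Definition upd (e : nat -> R) (i : nat) (x : R) : nat -> R :=
  fun k => if k == i then x else e k.

Lemma upd_same e i x : upd e i x i = x. Proof. by rewrite /upd eqxx. Qed.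
Lemma upd_upd e i x y : upd (upd e i x) i y = upd e i y.
Proof. by apply: functional_extensionality => k; rewrite /upd; case: (k == i). Qed.
Lemma upd_comm e i j x y : i != j -> upd (upd e i x) j y = upd (upd e j y) i x.
Proof.
move=> ij; apply: functional_extensionality => k; rewrite /upd.
by case: (eqVneq k j) => [->|//]; rewrite eq_sym (negbTE ij).
Qed.

Fixpoint tcoef (i : nat) (s : term R) : L :=
  match s with
  | TVar j => if j == i then 1 else 0
  | TConst _ | TZero => 0
  | TAdd a b => tcoef i a + tcoef i b
  | TScal l a => l * tcoef i a
  end.

Lemma teval_decomp e i s : teval e s = tcoef i s *: e i + teval (upd e i 0) s.
Proof.
elim: s => [j|c||a iha b ihb|l a iha] /=; try by rewrite scale0r add0r.
- by rewrite /upd; case: (eqVneq j i) => [->|]; rewrite ?scale1r ?addr0 ?scale0r ?add0r.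
- by rewrite iha ihb scalerDl addrACA.
- by rewrite iha scalerDr scalerA.
Qed.

Fixpoint tsubst (i : nat) (b : term R) (s : term R) : term R :=
  match s with
  | TVar j => if j == i then b else TVar R j
  | TAdd a c => TAdd (tsubst i b a) (tsubst i b c)
  | TScal l a => TScal l (tsubst i b a)
  | _ => s
  end.

Lemma teval_tsubst e i b s : teval e (tsubst i b s) = teval (upd e i (teval e b)) s.
Proof.
elim: s => [j|||a iha c ihc|l a iha] /=; rewrite ?iha ?ihc //.
by rewrite /upd; case: (j == i).
Qed.

Fixpoint qfree (f : formula R) : Prop :=
  match f with
  | FLt _ _ | FEq _ _ => True
  | FNot g => qfree g
  | FAnd g h | FOr g h => qfree g /\ qfree h
  | FEx _ _ => False
  end.

Fixpoint fsubst (i : nat) (b : term R) (f : formula R) : formula R :=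
  match f with
  | FLt s u => FLt (tsubst i b s) (tsubst i b u)
  | FEq s u => FEq (tsubst i b s) (tsubst i b u)
  | FNot g => FNot (fsubst i b g)
  | FAnd g h => FAnd (fsubst i b g) (fsubst i b h)
  | FOr g h => FOr (fsubst i b g) (fsubst i b h)
  | FEx _ _ => f
  end.

Lemma qfree_fsubst i b f : qfree f -> qfree (fsubst i b f).
Proof. by elim: f => //= [g ihg h ihh|g ihg h ihh] [? ?]; split; auto. Qed.

Lemma holds_fsubst e i b f : qfree f ->
  holds ltR e (fsubst i b f) <-> holds ltR (upd e i (teval e b)) f.
Proof.
elim: f e => [s u|s u|g ih|g ihg h ihh|g ihg h ihh|//] e /= hq;
  rewrite ?teval_tsubst //; first by rewrite ih.
- by case: hq => ? ?; rewrite ihg // ihh.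
- by case: hq => ? ?; rewrite ihg // ihh.
Qed.

Fixpoint atoms (f : formula R) : list (term R * term R) :=
  match f with
  | FLt s u | FEq s u => [:: (s, u)]
  | FNot g | FEx _ g => atoms g
  | FAnd g h | FOr g h => atoms g ++ atoms h
  end.

Definition atom_coef i (a : term R * term R) : L := tcoef i a.1 - tcoef i a.2.
Definition atom_rest e i (a : term R * term R) : R :=
  teval (upd e i 0) a.1 - teval (upd e i 0) a.2.
Definition atom_root e i a : R := - ((atom_coef i a)^-1 *: atom_rest e i a).
Definition atom_rootT i (a : term R * term R) : term R :=
  TScal (- (atom_coef i a)^-1)
    (TAdd (tsubst i (TZero R) a.1) (TScal (-1) (tsubst i (TZero R) a.2))).

Lemma atom_decomp e i a :
  teval e a.1 - teval e a.2 = atom_coef i a *: e i + atom_rest e i a.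
Proof.
rewrite (teval_decomp e i a.1) (teval_decomp e i a.2) /atom_coef /atom_rest.
by rewrite scalerBl opprD !addrA; congr (_ + _); rewrite addrAC.
Qed.

Lemma atom_rest_upd e i x a : atom_rest (upd e i x) i a = atom_rest e i a.
Proof. by rewrite /atom_rest upd_upd. Qed.

Lemma atom_decomp_upd e i x a :
  teval (upd e i x) a.1 - teval (upd e i x) a.2 = atom_coef i a *: x + atom_rest e i a.
Proof. by rewrite (atom_decomp _ i) upd_same atom_rest_upd. Qed.

Lemma teval_atom_rootT e i a : teval e (atom_rootT i a) = atom_root e i a.
Proof. by rewrite /= !teval_tsubst /= scaleN1r /atom_root /atom_rest scaleNr. Qed.

End LinearTerms.

Section ListExtremum.
Variables (L : unitRingType) (U : lmodType L) (lt : U -> U -> Prop).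
Hypothesis hlt : strict_total_order lt.

Lemma list_max (T : Type) (F : T -> U) (P : T -> Prop) (l : list T) :
  (exists a, List.In a l /\ P a) ->
  exists m, [/\ List.In m l, P m & forall a, List.In a l -> P a -> le_R lt (F a) (F m)].
Proof.
case: hlt => _ [lt_trans lt_total].
elim: l => [[a [[] _]]|b l ih] hex.
have b_max : P b -> (forall a, List.In a l -> P a -> le_R lt (F a) (F b)) ->
    exists m, [/\ List.In m (b :: l), P m &
      forall a, List.In a (b :: l) -> P a -> le_R lt (F a) (F m)].
  by move=> pb hb; exists b; split=> [||a [<-|ha] pa]; [left | | left | apply: hb].
case: (classic (exists a, List.In a l /\ P a)) => [/ih [m [lm pm hm]]|hl]; last first.
  by case: hex => a [[<-|ha] pa]; [apply: b_max => // c hc pc; case: hl; exists c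
                                  | case: hl; exists a].
have m_max : (P b -> le_R lt (F b) (F m)) ->
    exists m, [/\ List.In m (b :: l), P m &
      forall a, List.In a (b :: l) -> P a -> le_R lt (F a) (F m)].
  by move=> hb; exists m; split=> [||a [<-|ha] pa]; [right | | apply: hb | apply: hm].
case: (classic (P b)) => pb; last by apply: m_max.
case: (lt_total (F m) (F b)) => [mb|[mb|bm]]; last 2 first.
- by apply: m_max => _; left.
- by apply: m_max => _; right.
apply: b_max => // a ha pa; right.
by case: (hm a ha pa) => [->//|am]; apply: lt_trans am mb.
Qed.

End ListExtremum.

Lemma strict_total_order_flip (T : Type) (lt : T -> T -> Prop) :
  strict_total_order lt -> strict_total_order (fun x y => lt y x).
Proof.
case=> irr [tr tot]; do 2?split=> //.
- by move=> x y z hxy hyz; apply: tr hyz hxy.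
- by move=> x y; case: (tot x y) => [|[->|]]; auto.
Qed.

Section QuantifierElimination.
Variables (L : unitRingType) (ltL : L -> L -> Prop) (R : lmodType L) (ltR : R -> R -> Prop).
Hypothesis hL : ordered_division_ring ltL.
Hypothesis hR : ordered_vector_space ltL ltR.
Variable d0 : R.
Hypothesis hd0 : ltR 0 d0.

Definition same_side (x y r : R) := (ltR x r /\ ltR y r) \/ (ltR r x /\ ltR r y).

Lemma same_sideP (x y r : R) : same_side x y r ->
  (ltR x r <-> ltR y r) /\ (ltR r x <-> ltR r y).
Proof.
by case=> -[h h']; split; split=> // hc;
  [case: (ltR_asym hR h hc) | case: (ltR_asym hR h' hc)
  | case: (ltR_asym hR h hc) | case: (ltR_asym hR h' hc)].
Qed.

Lemma list_min (T : Type) (F : T -> R) (P : T -> Prop) (l : list T) :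
  (exists a, List.In a l /\ P a) ->
  exists m, [/\ List.In m l, P m & forall a, List.In a l -> P a -> le_R ltR (F m) (F a)].
Proof.
move=> /(list_max (strict_total_order_flip hR.1) F) [m [lm pm hm]].
by exists m; split=> // a la pa; case: (hm a la pa) => [->|]; [left | right].
Qed.

Lemma exists_same_side_above (T : Type) (F : T -> R) (P : T -> Prop) (l : list T) (y : R) :
  (forall a, List.In a l -> P a -> F a <> y) ->
  exists2 z, ltR y z & forall a, List.In a l -> P a -> same_side y z (F a).
Proof.
move=> hneq.
case: (classic (exists a, List.In a l /\ (P a /\ ltR y (F a)))) => [above|nabove].
  have [b [hb [_ yb] b_min]] := list_min F above.
  exists (midR y (F b)); first exact: (midR_gtl hL hR).
  move=> a ha pa; case: (ltR_total hR y (F a)) => [ya|[ya|ay]].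
  - by left; split=> //; apply: (ltR_leR_trans hR (midR_ltr hL hR yb)); apply: b_min.
  - by case: (hneq a ha pa).
  - by right; split=> //; apply: (ltR_trans hR) ay (midR_gtl hL hR yb).
exists (y + d0); first exact: (ltR_addr hR).
move=> a ha pa; case: (ltR_total hR y (F a)) => [ya|[ya|ay]].
- by case: nabove; exists a.
- by case: (hneq a ha pa).
- by right; split=> //; apply: (ltR_trans hR) ay (ltR_addr hR _ hd0).
Qed.

Lemma scaleR_sign_same (c : L) (w w' : R) : c != 0 -> same_side w w' 0 ->
  (ltR (c *: w) 0 <-> ltR (c *: w') 0) /\ (c *: w = 0 <-> c *: w' = 0).
Proof.
move=> c0 hw.
have nz v : ltR v 0 \/ ltR 0 v -> c *: v <> 0.
  by move=> hv /(scaleR_eq0 hL c0) v0; rewrite v0 in hv; case: hv; apply: (ltR_irr hR).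
split; last by case: hw => -[? ?]; split=> /nz; tauto.
case: (ltL_total hL c 0) => [cn|[c_eq0|cp]]; last 2 first.
- by rewrite c_eq0 eqxx in c0.
- by rewrite !(scaleR_lt0 hL hR) //; apply: (same_sideP hw).1.
have e (v : R) : c *: v = (- c) *: (- v) by rewrite scaleNr scalerN opprK.
rewrite (e w) (e w') !(scaleR_lt0 hL hR _ (oppL_gt0 hL cn)).
by rewrite (oppR_lt0 hR w) (oppR_lt0 hR w'); apply: (same_sideP hw).2.
Qed.

Lemma atom_same_side e i x y (a : term R * term R) :
  (atom_coef i a != 0 -> same_side x y (atom_root e i a)) ->
  (ltR (atom_coef i a *: x + atom_rest e i a) 0 <->
   ltR (atom_coef i a *: y + atom_rest e i a) 0) /\
  (atom_coef i a *: x + atom_rest e i a = 0 <-> atom_coef i a *: y + atom_rest e i a = 0).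
Proof.
move=> hs; case: (eqVneq (atom_coef i a) 0) => [->|c0]; first by rewrite !scale0r !add0r.
have root_eq (v : R) :
    atom_coef i a *: v + atom_rest e i a = atom_coef i a *: (v - atom_root e i a).
  rewrite /atom_root opprK scalerDr scalerA mulrV ?scale1r //; exact: (unitL hL).
rewrite !root_eq; apply: scaleR_sign_same => //.
by case: (hs c0) => -[h h'];
  [left; rewrite !(subR_lt0 hR) | right; rewrite !(subR_gt0 hR)].
Qed.

Lemma holds_same_side f e i x y : qfree f ->
  (forall a, List.In a (atoms f) -> atom_coef i a != 0 -> same_side x y (atom_root e i a)) ->
  holds ltR (upd e i x) f <-> holds ltR (upd e i y) f.
Proof.
have ltR_sub0 (u v : R) : ltR u v <-> ltR (u - v) 0 by rewrite (subR_lt0 hR).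
have eq_sub0 (u v : R) : u = v <-> u - v = 0.
  by split=> [->|/eqP]; [rewrite subrr | rewrite subr_eq0 => /eqP].
elim: f => [s u|s u|g ih|g ihg h ihh|g ihg h ihh|//] /= hq hs.
- rewrite ltR_sub0 [ltR (teval _ s) _]ltR_sub0.
  have := atom_decomp_upd e i x (s, u); have := atom_decomp_upd e i y (s, u) => /= -> ->.
  exact: (atom_same_side (hs (s, u) (or_introl erefl))).1.
- rewrite eq_sub0 [teval _ s = _]eq_sub0.
  have := atom_decomp_upd e i x (s, u); have := atom_decomp_upd e i y (s, u) => /= -> ->.
  exact: (atom_same_side (hs (s, u) (or_introl erefl))).2.
- by rewrite ih.
- case: hq => qg qh; rewrite ihg ?ihh // => a ha; apply: hs;
    apply: List.in_or_app; tauto.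
- case: hq => qg qh; rewrite ihg ?ihh // => a ha; apply: hs;
    apply: List.in_or_app; tauto.
Qed.

Definition bigor (l : list (formula R)) : formula R :=
  List.fold_right (@FOr _ _) (FNot (FEq (TZero R) (TZero R))) l.

Lemma holds_bigor e l : holds ltR e (bigor l) <-> exists2 f, List.In f l & holds ltR e f.
Proof.
elim: l => [|g l ih] /=; first by split=> [[]|[f []]].
rewrite ih; split=> [[h|[f hf h]]|[f [<-|hf] h]].
- by exists g; [left|].
- by exists f; [right|].
- by left.
- by right; exists f.
Qed.

Lemma qfree_bigor l : (forall f, List.In f l -> qfree f) -> qfree (bigor l).
Proof. by elim: l => [|g l ih] //= h; split; auto. Qed.

(* [TZero] makes the list of roots nonempty. *)
Definition roots i f : list (term R) := TZero R :: List.map (atom_rootT i) (atoms f).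

(* Test points for the variable [i]: just above and below every root, and the
   midpoint of any two roots (in particular every root itself). *)
Definition tests i f : list (term R) :=
  List.app (List.map (fun r => TAdd r (TConst d0)) (roots i f))
  (List.app (List.map (fun r => TAdd r (TScal (-1) (TConst d0))) (roots i f))
   (List.flat_map (fun r => List.map (fun r' => TScal (1 + 1)^-1 (TAdd r r')) (roots i f))
     (roots i f))).

Definition elim_ex i f : formula R := bigor (List.map (fun t => fsubst i t f) (tests i f)).

Lemma qfree_elim_ex i f : qfree f -> qfree (elim_ex i f).
Proof.
by move=> hq; apply: qfree_bigor => g /List.in_map_iff [t [<- _]]; apply: qfree_fsubst.
Qed.

Lemma atom_root_in_roots e i f a : List.In a (atoms f) ->
  exists2 r, List.In r (roots i f) & teval e r = atom_root e i a.
Proof.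
by move=> ha; exists (atom_rootT i a); [right; apply: List.in_map | apply: teval_atom_rootT].
Qed.

Lemma test_point e i f x : exists2 t, List.In t (tests i f) &
  teval e t = x \/ forall r, List.In r (roots i f) -> same_side x (teval e t) (teval e r).
Proof.
have in_mid r r' : List.In r (roots i f) -> List.In r' (roots i f) ->
    List.In (TScal (1 + 1)^-1 (TAdd r r')) (tests i f).
  move=> hr hr'; rewrite /tests; apply: List.in_or_app; right; apply: List.in_or_app; right.
  by apply/List.in_flat_map; exists r; split=> //; apply: List.in_map.
have roots_ne : exists r, List.In r (roots i f) /\ True by exists (TZero R); split; [left|].
case: (classic (exists2 r, List.In r (roots i f) & teval e r = x)) => [[r hr rx]|nroot].
  by exists (TScal (1 + 1)^-1 (TAdd r r)); [apply: in_mid | left; rewrite -(midRR hL x) -rx].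
have lt_or_gt r : List.In r (roots i f) -> ltR (teval e r) x \/ ltR x (teval e r).
  move=> hr; case: (ltR_total hR (teval e r) x) => [|[rx|]]; [left | | right] => //.
  by case: nroot; exists r.
case: (classic (exists r, List.In r (roots i f) /\ ltR (teval e r) x)) => [below|]; last first.
  move=> nbelow; have [m [hm _ m_min]] := list_min (teval e) roots_ne.
  exists (TAdd m (TScal (-1) (TConst d0))).
    by rewrite /tests; apply: List.in_or_app; right; apply: List.in_or_app; left;
      apply: List.in_map.
  right=> r hr; left; split; first by case: (lt_or_gt r hr) => // rx; case: nbelow; exists r.
  by rewrite /= scaleN1r; apply: (ltR_leR_trans hR (ltR_subr hR _ hd0)) (m_min r hr I).
case: (classic (exists r, List.In r (roots i f) /\ ltR x (teval e r))) => [above|]; last first.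
  move=> nabove; have [m [hm _ m_max]] := list_max hR.1 (teval e) roots_ne.
  exists (TAdd m (TConst d0)).
    by rewrite /tests; apply: List.in_or_app; left; apply: List.in_map.
  right=> r hr; right; split; first by case: (lt_or_gt r hr) => // rx; case: nabove; exists r.
  exact: (leR_ltR_trans hR (m_max r hr I)) (ltR_addr hR _ hd0).
have [a [ha ax a_max]] := list_max hR.1 (teval e) below.
have [b [hb xb b_min]] := list_min (teval e) above.
have ab := ltR_trans hR ax xb.
exists (TScal (1 + 1)^-1 (TAdd a b)); first exact: in_mid.
right=> r hr; case: (lt_or_gt r hr) => [rx|xr]; [right | left]; split=> //=.
- exact: (leR_ltR_trans hR) (a_max r hr rx) (midR_gtl hL hR ab).
- exact: (ltR_leR_trans hR) (midR_ltr hL hR ab) (b_min r hr xr).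
Qed.

Lemma elim_exP f e i : qfree f ->
  (exists x, holds ltR (upd e i x) f) <-> holds ltR e (elim_ex i f).
Proof.
move=> hq; rewrite /elim_ex holds_bigor; split; last first.
  by case=> g /List.in_map_iff [t [<- _]]; rewrite holds_fsubst //; exists (teval e t).
case=> x hx; have [t ht tx] := test_point e i f x.
exists (fsubst i t f); first exact: (List.in_map (fun t => fsubst i t f)).
rewrite holds_fsubst //; case: tx => [-> //|hs].
apply/(holds_same_side hq _).1: hx => a ha _.
by have [r hr <-] := atom_root_in_roots e i ha; apply: hs.
Qed.

Lemma quantifier_elimination f : exists2 g, qfree g & forall e, holds ltR e f <-> holds ltR e g.
Proof.
elim: f => [s u|s u|g [g' q1 h1]|g [g' q1 h1] h [h' q2 h2]|g [g' q1 h1] h [h' q2 h2]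
  |j g [g' q1 h1]].
- by exists (FLt s u).
- by exists (FEq s u).
- by exists (FNot g') => // e /=; rewrite h1.
- by exists (FAnd g' h') => // e /=; rewrite h1 h2.
- by exists (FOr g' h') => // e /=; rewrite h1 h2.
- exists (elim_ex j g'); first exact: qfree_elim_ex.
  by move=> e; rewrite -elim_exP //=; split=> -[r hr]; exists r; move: hr; rewrite h1.
Qed.

End QuantifierElimination.

Section ContinuityWithin.
Variables (L : unitRingType) (ltL : L -> L -> Prop) (R : lmodType L) (ltR : R -> R -> Prop).
Hypothesis hL : ordered_division_ring ltL.
Hypothesis hR : ordered_vector_space ltL ltR.
Variable d0 : R.
Hypothesis hd0 : ltR 0 d0.
Variable D : R -> Prop.

Definition cont_within (F : R -> R) (u : R) := forall a b, ltR a (F u) -> ltR (F u) b ->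
  exists c d, [/\ ltR c u, ltR u d &
    forall s, D s -> ltR c s -> ltR s d -> ltR a (F s) /\ ltR (F s) b].

Lemma interval_meet (u c1 d1 c2 d2 : R) :
  ltR c1 u -> ltR u d1 -> ltR c2 u -> ltR u d2 ->
  exists c d, [/\ ltR c u, ltR u d & forall s, ltR c s -> ltR s d ->
    [/\ ltR c1 s, ltR s d1, ltR c2 s & ltR s d2]].
Proof.
move=> c1u ud1 c2u ud2.
have [c [cu c1c c2c]] : exists c, [/\ ltR c u, le_R ltR c1 c & le_R ltR c2 c].
  case: (ltR_total hR c1 c2) => [h|[<-|h]]; last by exists c1; split=> //; [left | right].
  - by exists c2; split=> //; [right | left].
  - by exists c1; split=> //; left.
have [d [ud dd1 dd2]] : exists d, [/\ ltR u d, le_R ltR d d1 & le_R ltR d d2].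
  case: (ltR_total hR d1 d2) => [h|[<-|h]]; last by exists d2; split=> //; [right | left].
  - by exists d1; split=> //; [left | right].
  - by exists d1; split=> //; left.
exists c, d; split=> // s cs sd; split.
- exact: (leR_ltR_trans hR c1c cs).
- exact: (ltR_leR_trans hR sd dd1).
- exact: (leR_ltR_trans hR c2c cs).
- exact: (ltR_leR_trans hR sd dd2).
Qed.

Lemma cont_within_eq (G H : R -> R) (u : R) : cont_within G u -> cont_within H u ->
  (forall c d, ltR c u -> ltR u d -> exists s, [/\ D s, ltR c s, ltR s d & G s = H s]) ->
  G u = H u.
Proof.
suff not_lt G' H' : cont_within G' u -> cont_within H' u ->
    (forall c d, ltR c u -> ltR u d -> exists s, [/\ D s, ltR c s, ltR s d & G' s = H' s]) ->
    ~ ltR (G' u) (H' u).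
  move=> cG cH dens; case: (ltR_total hR (G u) (H u)) => [|[//|]] lt.
    by case: (not_lt G H cG cH dens lt).
  case: (not_lt H G cH cG _ lt) => c d cu ud.
  by have [s [? ? ? e]] := dens c d cu ud; exists s.
move=> cG cH dens lt.
(* Near [u], [G'] stays below and [H'] above the midpoint of [G' u] and [H' u]. *)
have [c1 [d1 [c1u ud1 hG]]] := cG _ _ (ltR_subr hR (G' u) hd0) (midR_gtl hL hR lt).
have [c2 [d2 [c2u ud2 hH]]] := cH _ _ (midR_ltr hL hR lt) (ltR_addr hR (H' u) hd0).
have [c [d [cu ud hcd]]] := interval_meet c1u ud1 c2u ud2.
have [s [Ds cs sd e]] := dens c d cu ud; have [k1 k2 k3 k4] := hcd s cs sd.
have := (hG s Ds k1 k2).2; rewrite e => /(ltR_trans hR (hH s Ds k3 k4).1).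
exact: (ltR_irr hR).
Qed.

Lemma cont_within_opp (F : R -> R) (u : R) :
  cont_within F u -> cont_within (fun t => - F t) u.
Proof.
move=> cF a b ha hb.
have hb' : ltR (- b) (F u) by have := ltR_opp hR hb; rewrite opprK.
have ha' : ltR (F u) (- a) by have := ltR_opp hR ha; rewrite opprK.
have [c [d [cu ud h]]] := cF _ _ hb' ha'.
exists c, d; split=> // s Ds cs sd; have [k1 k2] := h s Ds cs sd.
by split; [have := ltR_opp hR k2 | have := ltR_opp hR k1]; rewrite opprK.
Qed.

Lemma cont_within_affine (l : L) (k u : R) : cont_within (fun t => l *: t + k) u.
Proof.
have pos (l' : L) (k' : R) : ltL 0 l' -> cont_within (fun t => l' *: t + k') u.
  move=> l0 a b ha hb.
  have l'K (x : R) : l' *: (l'^-1 *: x) = x.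
    by rewrite scalerA mulrV ?scale1r //; apply: (unitL hL); apply: (ltL_neq0 hL).
  have pre (x y : R) : ltR x (l' *: y + k') <-> ltR (l'^-1 *: (x - k')) y.
    rewrite -[in X in _ <-> X](ltR_scale2 hL hR _ _ l0) l'K.
    by rewrite -(subR_gt0 hR) -[in X in _ <-> X](subR_gt0 hR) opprB addrA.
  have post (x y : R) : ltR (l' *: y + k') x <-> ltR y (l'^-1 *: (x - k')).
    rewrite -[in X in _ <-> X](ltR_scale2 hL hR _ _ l0) l'K.
    by rewrite -(subR_gt0 hR) -[in X in _ <-> X](subR_gt0 hR) opprD addrA addrAC.
  exists (l'^-1 *: (a - k')), (l'^-1 *: (b - k')).
  by split=> [||s _ cs sd]; [apply/pre | apply/post | split; [apply/pre | apply/post]].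
case: (ltL_total hL l 0) => [ln|[->|]]; last exact: pos.
  have -> : (fun t => l *: t + k) = (fun t => - ((- l) *: t + (- k))).
    by apply: functional_extensionality => t; rewrite scaleNr opprD !opprK.
  exact/cont_within_opp/pos/(oppL_gt0 hL).
move=> a b ha hb; exists (u - d0), (u + d0).
split=> [||s _ _ _]; [exact: (ltR_subr hR) | exact: (ltR_addr hR) |].
by move: ha hb; rewrite !scale0r; split.
Qed.

End ContinuityWithin.

Section PiecewiseAffineGraph.
Variables (L : unitRingType) (ltL : L -> L -> Prop) (R : lmodType L) (ltR : R -> R -> Prop).
Hypothesis hL : ordered_division_ring ltL.
Hypothesis hR : ordered_vector_space ltL ltR.
Variable d0 : R.
Hypothesis hd0 : ltR 0 d0.
Variable psi : formula R.
Variables vt vz : nat.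
Hypothesis hq : qfree psi.
Hypothesis hv : vt != vz.

(* Solving the atom [a] for [vz] gives a root that is affine in [vt], with slope
   [slope a] independent of the parameters [e0]. *)
Definition slope (a : term R * term R) : L :=
  - ((atom_coef vz a)^-1 * atom_coef vt a).
Definition root_line (e0 : nat -> R) (a : term R * term R) (t : R) : R :=
  atom_root (upd e0 vt t) vz a.

Lemma root_line_affine e0 a t : root_line e0 a t = slope a *: t + root_line e0 a 0.
Proof.
have rest (s : R) : atom_rest (upd e0 vt s) vz a =
    atom_coef vt a *: s + atom_rest (upd e0 vz 0) vt a.
  by rewrite /atom_rest (upd_comm e0 s 0 hv) -(atom_decomp_upd _ vt).
by rewrite /root_line /atom_root !rest scaler0 add0r /slope scalerDr opprD scaleNr scalerA.
Qed.

Definition line_formula (a : term R * term R) : formula R := fsubst vz (atom_rootT vz a) psi.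

Definition breakpoints (e0 : nat -> R) : list R :=
  List.flat_map (fun a => List.map (atom_root e0 vt) (atoms (line_formula a))) (atoms psi).

Lemma line_formula_same_side e0 a t1 t2 : List.In a (atoms psi) ->
  (forall r, List.In r (breakpoints e0) -> same_side ltR t1 t2 r) ->
  holds ltR (upd e0 vt t1) (line_formula a) <-> holds ltR (upd e0 vt t2) (line_formula a).
Proof.
move=> ha hs; apply: (holds_same_side hL hR (qfree_fsubst _ _ hq)) => b hb _; apply: hs.
by apply/List.in_flat_map; exists a; split=> //; apply: List.in_map.
Qed.

Section SlopeBound.
Variable K : L.
Hypothesis hK : forall a, List.In a (atoms psi) ->
  leL ltL 0 (K - slope a) /\ leL ltL 0 (K + slope a).
Variables (e0 : nat -> R) (q : R) (g : R -> R).
Hypothesis hq0 : le_R ltR 0 q.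
Hypothesis hg : forall t z, in_cc ltR 0 q t ->
  holds ltR (upd (upd e0 vt t) vz z) psi <-> z = g t.
Hypothesis hcont : forall t, in_cc ltR 0 q t -> cont_within ltR (in_cc ltR 0 q) g t.

Lemma graph_on_root_line t : in_cc ltR 0 q t ->
  exists a, [/\ List.In a (atoms psi), atom_coef vz a != 0 & g t = root_line e0 a t].
Proof.
move=> dt; apply: NNPP => hno.
have [z gz hs] := exists_same_side_above hL hR hd0 (F := root_line e0 ^~ t)
  (P := fun a => atom_coef vz a != 0) (l := atoms psi) (y := g t)
  (fun a ha hc e => hno (ex_intro _ a (And3 ha hc (esym e)))).
have := (holds_same_side hL hR hq hs).1 ((hg _ dt).2 erefl).
by rewrite hg // => ez; rewrite ez in gz; apply: (ltR_irr hR) gz.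
Qed.

Lemma holds_line_formula a t : in_cc ltR 0 q t ->
  holds ltR (upd e0 vt t) (line_formula a) <-> root_line e0 a t = g t.
Proof. by move=> dt; rewrite /line_formula holds_fsubst // teval_atom_rootT; apply: hg. Qed.

Lemma graph_line_on_gap u v : in_cc ltR 0 q u -> in_cc ltR 0 q v -> ltR u v ->
  (forall r, List.In r (breakpoints e0) -> ~ (ltR u r /\ ltR r v)) ->
  exists2 a, List.In a (atoms psi) &
    forall s, ltR u s -> ltR s v -> in_cc ltR 0 q s /\ g s = root_line e0 a s.
Proof.
move=> [du _] [_ dv] uv hbp.
have inside s : ltR u s -> ltR s v -> in_cc ltR 0 q s.
  move=> us sv; split; right; first exact: (leR_ltR_trans hR du us).
  exact: (ltR_leR_trans hR sv dv).
set m := midR u v; have um := midR_gtl hL hR uv; have mv := midR_ltr hL hR uv.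
have [a [ha _ gm]] := graph_on_root_line (inside _ um mv).
have hm := (holds_line_formula a (inside _ um mv)).2 (esym gm).
exists a => // s us sv; split; first exact: inside.
apply/esym/(holds_line_formula a (inside _ us sv)).
suff hs r : List.In r (breakpoints e0) -> same_side ltR m s r.
  exact: (line_formula_same_side ha hs).1 hm.
move=> hr.
case: (ltR_total hR u r) => [ur|[<-|ru]]; last 2 first.
- by right.
- by right; split; apply: (ltR_trans hR) ru _.
case: (ltR_total hR r v) => [rv|[->|vr]]; first by case: (hbp r hr).
- by left.
- by left; split; apply: (ltR_trans hR) vr.
Qed.

Lemma graph_affine_on_gap u v : in_cc ltR 0 q u -> in_cc ltR 0 q v -> ltR u v ->
  (forall r, List.In r (breakpoints e0) -> ~ (ltR u r /\ ltR r v)) ->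
  exists2 a, List.In a (atoms psi) & g v - g u = slope a *: (v - u).
Proof.
move=> du dv uv hbp; have [a ha hgap] := graph_line_on_gap du dv uv hbp.
have cline w : cont_within ltR (in_cc ltR 0 q) (root_line e0 a) w.
  have -> : root_line e0 a = (fun t => slope a *: t + root_line e0 a 0).
    by apply: functional_extensionality => t; apply: root_line_affine.
  exact: (cont_within_affine hL hR hd0).
have gu : g u = root_line e0 a u.
  apply: (cont_within_eq hL hR hd0 (hcont du) (cline u)) => c d cu ud.
  have [s [us sv sd]] := exists_ltR_min hL hR uv ud; have [? ?] := hgap s us sv.
  by exists s; split=> //; apply: (ltR_trans hR) us.
have gv : g v = root_line e0 a v.
  apply: (cont_within_eq hL hR hd0 (hcont dv) (cline v)) => c d cv vd.
  have [s [us sv cs]] := exists_ltR_max hL hR uv cv; have [? ?] := hgap s us sv.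
  by exists s; split=> //; apply: (ltR_trans hR) vd.
exists a => //.
by rewrite gu gv (root_line_affine e0 a v) (root_line_affine e0 a u) scalerBr opprD addrACA
  subrr addr0.
Qed.

Definition slope_bounded u v :=
  le_R ltR (g v - g u) (K *: (v - u)) /\ le_R ltR (g u - g v) (K *: (v - u)).

Lemma slope_bounded_refl u : slope_bounded u u.
Proof. by rewrite /slope_bounded !subrr scaler0; split; left. Qed.

Lemma slope_bounded_trans u w v : slope_bounded u w -> slope_bounded w v -> slope_bounded u v.
Proof.
move=> [uw1 uw2] [wv1 wv2]; rewrite /slope_bounded.
have -> : K *: (v - u) = K *: (v - w) + K *: (w - u) by rewrite -scalerDr addrA subrK.
have -> : g v - g u = (g v - g w) + (g w - g u) by rewrite addrA subrK.
have -> : g u - g v = (g w - g v) + (g u - g w) by rewrite [RHS]addrC addrA subrK.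
by split; apply: (leR_add hR).
Qed.

Lemma slope_bounded_gap u v : in_cc ltR 0 q u -> in_cc ltR 0 q v -> ltR u v ->
  (forall r, List.In r (breakpoints e0) -> ~ (ltR u r /\ ltR r v)) -> slope_bounded u v.
Proof.
move=> du dv uv hbp; have [a ha e] := graph_affine_on_gap du dv uv hbp.
have vu := (subR_gt0 hR u v).2 uv; have [k1 k2] := hK ha.
rewrite /slope_bounded e; split; apply: (subR_ge0 hR) => //.
- by rewrite -scalerBl; apply: (scaleR_ge0 hL hR).
- by rewrite -[g u - g v]opprB e -scaleNr -scalerBl opprK; apply: (scaleR_ge0 hL hR).
Qed.

Lemma slope_bounded_breakpoints (E : list R) u v :
  in_cc ltR 0 q u -> in_cc ltR 0 q v -> le_R ltR u v ->
  (forall r, List.In r (breakpoints e0) -> ltR u r -> ltR r v -> List.In r E) ->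
  slope_bounded u v.
Proof.
elim: E u v => [|r E ih] u v du dv [<-|uv] hE; try exact: slope_bounded_refl.
  by apply: slope_bounded_gap => // r hr [ur rv]; apply: hE ur rv.
have inE r' : List.In r' (r :: E) -> r' <> r -> List.In r' E by case=> [<-|].
case: (classic (ltR u r /\ ltR r v)) => [[ur rv]|nr]; last first.
  apply: ih => // [|r' hr' ur' r'v]; first by right.
  by apply: (inE _ (hE r' hr' ur' r'v)) => er; apply: nr; rewrite -er.
have dr : in_cc ltR 0 q r.
  by split; right; [apply: (leR_ltR_trans hR) du.1 ur | apply: (ltR_leR_trans hR) rv dv.2].
apply: (@slope_bounded_trans _ r); apply: ih => //; try by right.
- move=> r' hr' ur' r'r; apply: (inE _ (hE r' hr' ur' (ltR_trans hR r'r rv))) => er.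
  by rewrite er in r'r; apply: (ltR_irr hR) r'r.
- move=> r' hr' rr' r'v; apply: (inE _ (hE r' hr' (ltR_trans hR ur rr') r'v)) => er.
  by rewrite er in rr'; apply: (ltR_irr hR) rr'.
Qed.

Lemma slope_bounded_0q : slope_bounded 0 q.
Proof.
have dz : in_cc ltR 0 q 0 by split=> //; left.
have dq : in_cc ltR 0 q q by split=> //; left.
exact: (slope_bounded_breakpoints dz dq hq0 (fun r hr _ _ => hr)).
Qed.

End SlopeBound.

Lemma qfree_graph_lipschitz : exists K : L, forall (e0 : nat -> R) (q : R) (g : R -> R),
  le_R ltR 0 q ->
  (forall t z, in_cc ltR 0 q t -> holds ltR (upd (upd e0 vt t) vz z) psi <-> z = g t) ->
  (forall t, in_cc ltR 0 q t -> cont_within ltR (in_cc ltR 0 q) g t) ->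
  le_R ltR (g q - g 0) (K *: q) /\ le_R ltR (g 0 - g q) (K *: q).
Proof.
have [K [_ hK]] := list_boundL hL (List.map slope (atoms psi)).
exists K => e0 q g hq0 hg hcont.
have hK' a : List.In a (atoms psi) -> leL ltL 0 (K - slope a) /\ leL ltL 0 (K + slope a).
  by move=> ha; apply: hK; apply: List.in_map.
by have := slope_bounded_0q hK' hq0 hg hcont; rewrite /slope_bounded subr0.
Qed.

End PiecewiseAffineGraph.

Section Environments.
Variables (L : unitRingType) (R : lmodType L) (ltR : R -> R -> Prop).

Fixpoint exs (l : seq nat) (f : formula R) : formula R :=
  if l is v :: l' then FEx v (exs l' f) else f.

Lemma holds_exs l f e : holds ltR e (exs l f) <->
  exists2 e', (forall k, k \notin l -> e' k = e k) & holds ltR e' f.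
Proof.
elim: l e => [|v l ih] e /=.
  split=> [h|[e' he h]]; first by exists e.
  by have -> : e = e' by apply: functional_extensionality => k; rewrite he.
split=> [[r /ih [e' he h]]|[e' he h]].
  exists e' => // k; rewrite in_cons negb_or => /andP [kv kl].
  by rewrite he // (negbTE kv).
exists (e' v); apply/ih; exists e' => // k kl.
by case: eqP => [->|kv] //; apply: he; rewrite in_cons negb_or kl andbT; apply/eqP.
Qed.

Lemma env_of_val n (w : 'I_n -> R) (o : 'I_n) : env_of w o = w o.
Proof. by rewrite /env_of valK. Qed.

Lemma env_of_ge n (w : 'I_n -> R) k : (n <= k)%N -> env_of w k = 0.
Proof. by move=> nk; rewrite /env_of insubN // -leqNgt. Qed.

Lemma env_of_restrict N (e : nat -> R) :
  (forall k, (N <= k)%N -> e k = 0) -> env_of (fun o : 'I_N => e o) = e.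
Proof.
move=> e0; apply: functional_extensionality => k; rewrite /env_of.
by case: insubP => [o _ <-|] //=; rewrite -leqNgt => /e0.
Qed.

Definition join m k (w : 'I_m -> R) (y : 'I_k -> R) : 'I_(m + k) -> R :=
  fun o => if (o < m)%N then env_of w o else env_of y (o - m).

Lemma env_of_join m k (w : 'I_m -> R) (y : 'I_k -> R) :
  env_of (join w y) = fun l => if (l < m)%N then env_of w l else env_of y (l - m).
Proof.
apply: functional_extensionality => l; rewrite {1}/env_of.
case: insubP => [o _ <-|/negP lmk] //=.
by rewrite ifN ?env_of_ge //; lia.
Qed.

Lemma lpart_join m k (w : 'I_m -> R) (y : 'I_k -> R) : lpart (join w y) = w.
Proof.
by apply: functional_extensionality => i; rewrite /lpart /join /= ltn_ord env_of_val.
Qed.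

Lemma rpart_join m k (w : 'I_m -> R) (y : 'I_k -> R) : rpart (join w y) = y.
Proof.
apply: functional_extensionality => j; rewrite /rpart /join /=.
by rewrite ifN -?leqNgt ?leq_addr // addKn env_of_val.
Qed.

(* The witness is the graph formula with all outputs but the [j]-th one
   existentially quantified. *)
Lemma definable_map_coord m k (D : ('I_m -> R) -> Prop) (F : ('I_m -> R) -> 'I_k -> R)
    (j : 'I_k) :
  definable_map ltR D F -> exists phi : formula R, forall w y, D w ->
    holds ltR (env_of (join w y)) phi <-> y j = F w j.
Proof.
case=> f hf; set others := [seq (m + j')%N | j' <- iota 0 k & j' != nat_of_ord j].
have others_spec l : (l \in others) = (m <= l < m + k)%N && (l != m + j)%N.
  apply/mapP/idP => [[j' hj' ->]|/andP [/andP [ml lmk] lj]].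
    by move: hj'; rewrite mem_filter mem_iota => /andP [/eqP ? ?]; apply/andP; split; lia.
  by exists (l - m)%N; [rewrite mem_filter mem_iota; apply/andP; split; lia | lia].
exists (exs others f) => w y Dw; rewrite holds_exs; split=> [[e' he hfe]|yj].
  have e'_ge l : (m + k <= l)%N -> e' l = 0.
    move=> lmk; rewrite he ?others_spec; last by lia.
    by rewrite env_of_join /= ifN ?env_of_ge //; lia.
  have := (hf (fun o => e' o)).2; rewrite env_of_restrict // => /(_ hfe) [].
  have -> : lpart (fun o : 'I_(m + k) => e' o) = w.
    apply: functional_extensionality => i.
    rewrite /lpart /= he ?others_spec; last by have := ltn_ord i; lia.
    by rewrite env_of_join /= ltn_ord env_of_val.
  move=> _ /(_ j); rewrite /rpart /= he ?others_spec; last by lia.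
  by rewrite env_of_join /= ifN ?addKn ?env_of_val //; lia.
set y' := fun j' => if j' == j then y j else F w j'.
exists (env_of (join w y')) => [l|].
  rewrite others_spec !env_of_join /= => ol; case: ltnP => // ml.
  have [lmk|->] : (k <= l - m)%N \/ l = (m + j)%N by lia.
    by rewrite !env_of_ge.
  by rewrite addKn !env_of_val /y' eqxx.
apply: (hf (join w y')).1; rewrite lpart_join rpart_join; split=> // j'.
by rewrite /y'; case: eqP => [->|].
Qed.

End Environments.

Section Slices.
Variables (L : unitRingType) (ltL : L -> L -> Prop) (R : lmodType L) (ltR : R -> R -> Prop).
Hypothesis hR : ordered_vector_space ltL ltR.
Variable d0 : R.
Hypothesis hd0 : ltR 0 d0.

Definition tcons n (t : R) (x : 'I_n -> R) : 'I_(1 + n) -> R :=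
  fun o => if nat_of_ord o is j.+1 then env_of x j else t.

Lemma tfirst_tcons n t (x : 'I_n -> R) : tfirst (tcons t x) = t.
Proof. by []. Qed.

Lemma tlast_tcons n t (x : 'I_n -> R) : tlast (tcons t x) = x.
Proof. by apply: functional_extensionality => j; rewrite /tlast /tcons /= env_of_val. Qed.

Lemma env_of_tcons n t (x : 'I_n -> R) :
  env_of (tcons t x) = fun l => if l is j.+1 then env_of x j else t.
Proof.
apply: functional_extensionality => l; rewrite {1}/env_of.
case: insubP => [o _ <-|/negP ln] //=; case: l ln => [//|l ln].
by rewrite env_of_ge //; lia.
Qed.

Lemma cont_within_slice n k (D : ('I_(1 + n) -> R) -> Prop)
    (F : ('I_(1 + n) -> R) -> 'I_k -> R) (T : R -> Prop) (x : 'I_n -> R) (j : 'I_k) :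
  continuous_on ltR D F -> (forall s, T s -> D (tcons s x)) ->
  forall t, T t -> cont_within ltR T (fun s => F (tcons s x) j) t.
Proof.
move=> hc hD t Tt a b ha hb.
pose a' j' := if j' == j then a else F (tcons t x) j' - d0.
pose b' j' := if j' == j then b else F (tcons t x) j' + d0.
have hab j' : ltR (a' j') (F (tcons t x) j') /\ ltR (F (tcons t x) j') (b' j').
  rewrite /a' /b'; case: eqP => [->|_]; split=> //.
  - exact: (ltR_subr hR).
  - exact: (ltR_addr hR).
have [c [d [hcd hbox]]] := hc _ (hD t Tt) a' b' hab.
have [ct td] := hcd (lshift n ord0).
exists (c (lshift n ord0)), (d (lshift n ord0)); split=> // s Ts cs sd.
have := hbox (tcons s x) (hD s Ts) _ j; rewrite /a' /b' eqxx; apply=> o.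
case: o => -[|o'] ho; last exact: hcd (Ordinal ho).
by have -> : Ordinal ho = lshift n ord0 by apply: val_inj.
Qed.

End Slices.

Section Homotopy.
Variables (L : unitRingType) (ltL : L -> L -> Prop) (R : lmodType L) (ltR : R -> R -> Prop).
Hypothesis hL : ordered_division_ring ltL.
Hypothesis hR : ordered_vector_space ltL ltR.
Variable d0 : R.
Hypothesis hd0 : ltR 0 d0.

Definition single n (i : 'I_n) (c : R) : 'I_n -> R := fun j => if j == i then c else 0.

Lemma env_of_single n (i : 'I_n) (c : R) :
  env_of (single i c) = fun l => if l == i then c else 0.
Proof.
apply: functional_extensionality => l; rewrite /env_of.
case: insubP => [o _ <-|/negP ln] //=; case: eqP => // li.
by exfalso; apply: ln; rewrite li.
Qed.

(* In the graph of the homotopy, variable [0] is the time, variables [1..n] the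
   starting point and [1 + n + i] the [i]-th coordinate of the value. *)
Lemma env_of_graph_point n (x : 'I_n -> R) (i : 'I_n) t c :
  env_of (join (tcons t x) (single i c)) =
  upd (upd (env_of (join (tcons 0 x) (single i 0))) 0 t) (1 + n + i) c.
Proof.
apply: functional_extensionality => l.
rewrite /upd !env_of_join !env_of_tcons !env_of_single /=.
case: (ltnP l (1 + n)) => ln.
  by rewrite ifN; [case: l ln => //= l ->| lia].
rewrite if_same; have -> : (l == 0)%N = false by lia.
by have -> : (l - (1 + n) == i)%N = (l == 1 + n + i)%N by apply/eqP/eqP; lia.
Qed.

Lemma homotopy_coordinate_lipschitz n (X : ('I_n -> R) -> Prop) (q : R)
    (H : R -> ('I_n -> R) -> 'I_n -> R) (i : 'I_n) :
  le_R ltR 0 q ->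
  definable_map ltR (fun w => le_R ltR 0 (tfirst w) /\ le_R ltR (tfirst w) q /\ X (tlast w))
    (fun w => H (tfirst w) (tlast w)) ->
  continuous_on ltR (fun w => le_R ltR 0 (tfirst w) /\ le_R ltR (tfirst w) q /\ X (tlast w))
    (fun w => H (tfirst w) (tlast w)) ->
  exists K : L, forall x, X x ->
    le_R ltR (H q x i - H 0 x i) (K *: q) /\ le_R ltR (H 0 x i - H q x i) (K *: q).
Proof.
move=> hq0 hdef hcont.
have [phi hphi] := definable_map_coord i hdef.
have [psi qpsi hpsi] := quantifier_elimination hL hR hd0 phi.
have [K hK] := qfree_graph_lipschitz hL hR hd0 qpsi (vt := 0) (vz := 1 + n + i) isT.
exists K => x Xx.
have dom s : in_cc ltR 0 q s -> le_R ltR 0 (tfirst (tcons s x)) /\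
    le_R ltR (tfirst (tcons s x)) q /\ X (tlast (tcons s x)).
  by case=> s0 sq; rewrite tfirst_tcons tlast_tcons.
apply: (hK (env_of (join (tcons 0 x) (single i 0))) q (fun t => H t x i)) => // [t z dt|t dt].
  rewrite -env_of_graph_point -hpsi hphi ?tfirst_tcons ?tlast_tcons //; last by case: dt.
  by rewrite /single eqxx.
have -> : (fun s => H s x i) = fun s => H (tfirst (tcons s x)) (tlast (tcons s x)) i.
  by apply: functional_extensionality => s; rewrite tlast_tcons.
exact: (cont_within_slice hR hd0 (j := i) hcont dom dt).
Qed.

Lemma bounded_of_box n (X : ('I_n -> R) -> Prop) (p r : 'I_n -> R) :
  (forall x, X x -> forall i, le_R ltR (x i - p i) (r i) /\ le_R ltR (p i - x i) (r i)) ->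
  bounded ltR X.
Proof.
move=> hX; exists (fun i => p i - (r i + d0)), (fun i => p i + (r i + d0)) => x Xx i.
have [xp px] := hX x Xx i.
have lt_d (u v : R) : le_R ltR u v -> ltR u (v + d0).
  by move=> uv; apply: (leR_ltR_trans hR uv (ltR_addr hR _ hd0)).
split; first by rewrite -(subR_gt0 hR) opprB addrCA -opprB; apply/(subR_gt0 hR)/lt_d.
by rewrite -(subR_gt0 hR) addrAC addrC -opprB; apply/(subR_gt0 hR)/lt_d.
Qed.

End Homotopy.

Lemma exists_gt0 (L : unitRingType) (ltL : L -> L -> Prop) (R : lmodType L)
    (ltR : R -> R -> Prop) :
  ordered_vector_space ltL ltR -> (exists x : R, x != 0) -> exists d, ltR 0 d.
Proof.
move=> hR [x /eqP x0]; case: (ltR_total hR x 0) => [xn|[//|xp]]; last by exists x.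
by exists (- x); apply/(oppR_lt0 hR); rewrite opprK.
Qed.

Theorem mainTheorem9 (L : unitRingType) (ltL : L -> L -> Prop)
    (R : lmodType L) (ltR : R -> R -> Prop)
    (hL : ordered_division_ring ltL) (hR : ordered_vector_space ltL ltR)
    (hnt : exists x : R, x != 0)
    (n : nat) (X : ('I_n -> R) -> Prop)
    (hX : definable ltR X) (hunb : ~ bounded ltR X) :
  ~ definably_contractible ltR X.
Proof.
move=> [p [_ [_ [_ [q [hq0 [H /= [hdef [hcont [_ [h0 [_ [_ hq]]]]]]]]]]]]].
have [d0 hd0] := exists_gt0 hR hnt.
have [K hK] := fin_all_exists (fun i => homotopy_coordinate_lipschitz hL hR hd0 i hq0 hdef hcont).
apply: hunb; apply: (bounded_of_box hR hd0 (p := p) (r := fun i => K i *: q)) => x Xx i.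
by have := hK i x Xx; rewrite hq // h0.
Qed.
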